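(* Under the hypotheses of the arrival-bound lemma (all $\lambda_j>0$, $\min_j\lambda_j\Gamma\ge e^{2e}$, $|\sum_{i=1}^kU^j_i-\lambda_j^{-1}k|\le\Gamma\phi(k)$ for all $k\ge1$, $j$), let $P\in\{0,1\}^{J\times J}$ have row sums in $\{0,1\}$ and $P^N=0$ for some $N$, and set $\bar\lambda=(I-P^T)^{-1}\lambda$, $\bar A(t)=(I-P^T)^{-1}A(t)$. Then for every $t\ge\max_j\big(\lambda_j^{-1}e^e,\lambda_j^{-1}+3\lambda_j^{-1}\lambda_{\max}^2\Gamma^2\big)$ and every $j$, $$\phi(\bar A_j(t))\le\big(2+6\lambda_{\max}^2\Gamma^2\big)^{1/2}\phi(\bar\lambda_jt).$$
   Context: $\phi(x)=\sqrt{x\ln\ln x}$ for $x\ge e^e$, $\phi(x)=1$ otherwise. $A_j(t)=\max\{k\ge0:\sum_{i=1}^kU^j_i\le t\}$, $A(t)=(A_j(t))_j$, $\lambda=(\lambda_j)_j$, $\lambda_{\max}=\max_j\lambda_j$. *)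

From Stdlib Require Import Reals.
Open Scope R_scope.

Definition phi (x : R) : R :=
  if Rle_dec (exp (exp 1)) x then sqrt (x * ln (ln x)) else 1.

Fixpoint sum_to (n : nat) (f : nat -> R) : R :=
  match n with
  | O => 0
  | S m => sum_to m f + f m
  end.

(* Partial sums  sum_{i=1}^k U_i  of a sequence indexed from 1 *)
Definition psum (U : nat -> R) (k : nat) : R := sum_to k (fun i => U (S i)).

Definition is_arrival_count (U : nat -> R) (t : R) (k : nat) : Prop :=
  psum U k <= t /\ (forall k' : nat, psum U k' <= t -> (k' <= k)%nat).

(* J x J matrices over indices 0..J-1, represented as functions *)
Definition ident (i k : nat) : R := if Nat.eqb i k then 1 else 0.
Definition matmul (J : nat) (A B : nat -> nat -> R) (i k : nat) : R :=
  sum_to J (fun l => A i l * B l k).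
Fixpoint matpow (J : nat) (P : nat -> nat -> R) (n : nat) : nat -> nat -> R :=
  match n with
  | O => ident
  | S m => matmul J (matpow J P m) P
  end.

Definition I_minus_PT (J : nat) (P : nat -> nat -> R) (x : nat -> R) (j : nat) : R :=
  x j - sum_to J (fun k => P k j * x k).

Fixpoint max_to (n : nat) (l : nat -> R) : R :=
  match n with
  | O => 0
  | S m => Rmax (max_to m l) (l m)
  end.

From Stdlib Require Import Reals Lra Lia Psatz.
Open Scope R_scope.

(* The arrival counts bound themselves: A_j(t) <= lambda_j t + lambda_j Gamma phi(A_j(t)).
   Since ln ln a < 2 sqrt a, AM-GM turns this into a quadratic inequality in sqrt(A_j(t)),
   whence A_j(t) <= alpha lambda_j t with alpha = 1 + 3 lambda_max^2 Gamma^2.  As P is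
   nonnegative and nilpotent, (I - P^T)^{-1} = sum_n (P^T)^n is a nonnegative matrix, so the
   bound passes to Abar <= alpha t lbar.  Finally phi grows by at most a factor sqrt(2 alpha)
   under a dilation by alpha <= y, because ln ln (alpha y) <= ln ln (y^2) <= 2 ln ln y. *)

Lemma ln_le_ln x y : 0 < x -> x <= y -> ln x <= ln y.
Proof.
  intros Hx [Hxy | ->]; [left; exact (ln_increasing _ _ Hx Hxy) | lra].
Qed.

Lemma ln_le_sub_1 x : 0 < x -> ln x <= x - 1.
Proof. intros Hx; pose proof (exp_ineq1_le (ln x)); rewrite exp_ln in *; lra. Qed.

Lemma exp_1_gt_2 : 2 < exp 1.
Proof. pose proof (exp_ineq1 1); lra. Qed.

Lemma le_mul_of_inv_mul_le l b t : 0 < l -> / l * b <= t -> b <= l * t.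
Proof.
  intros Hl Hb; apply Rmult_le_compat_l with (r := l) in Hb; [| lra].
  rewrite <- Rmult_assoc, Rinv_r, Rmult_1_l in Hb by lra; exact Hb.
Qed.

Lemma exp_1_le_ln x : exp (exp 1) <= x -> exp 1 <= ln x.
Proof.
  intros Hx; rewrite <- (ln_exp (exp 1)); apply ln_le_ln; [apply exp_pos | exact Hx].
Qed.

Lemma ln_ln_ge_1 x : exp (exp 1) <= x -> 1 <= ln (ln x).
Proof.
  intros Hx; pose proof exp_1_gt_2.
  rewrite <- (ln_exp 1); apply ln_le_ln; [lra | exact (exp_1_le_ln x Hx)].
Qed.

Lemma ln_ln_lt_2_sqrt x : exp (exp 1) <= x -> ln (ln x) < 2 * sqrt x.
Proof.
  intros Hx; pose proof (exp_1_le_ln x Hx); pose proof exp_1_gt_2.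
  pose proof (exp_pos (exp 1)).
  assert (Hq : 0 < sqrt x) by (apply sqrt_lt_R0; lra).
  assert (Hlnx : ln x = 2 * ln (sqrt x)).
  { rewrite <- (sqrt_sqrt x) at 1 by lra; rewrite ln_mult by lra; ring. }
  pose proof (ln_le_sub_1 (ln x)); pose proof (ln_le_sub_1 (sqrt x) Hq); lra.
Qed.

Lemma ln_ln_sqr_le x : exp (exp 1) <= x -> ln (ln (x * x)) <= 2 * ln (ln x).
Proof.
  intros Hx; pose proof (exp_1_le_ln x Hx); pose proof (ln_ln_ge_1 x Hx).
  pose proof exp_1_gt_2; pose proof (exp_pos (exp 1)).
  rewrite ln_mult by lra; replace (ln x + ln x) with (2 * ln x) by ring.
  rewrite ln_mult by lra.
  pose proof (ln_le_sub_1 2); lra.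
Qed.

Lemma phi_le_sqrt_scale alpha x y :
  1 <= alpha -> alpha <= y -> exp (exp 1) <= y -> x <= alpha * y ->
  phi x <= sqrt (2 * alpha) * phi y.
Proof.
  intros Ha Hay Hy Hx.
  pose proof (ln_ln_ge_1 y Hy) as Hly.
  assert (Hphiy : phi y = sqrt (y * ln (ln y))).
  { unfold phi; destruct Rle_dec; [reflexivity | lra]. }
  rewrite Hphiy, <- sqrt_mult_alt by lra.
  unfold phi at 1; destruct Rle_dec as [Hxe | _]; [| rewrite <- sqrt_1];
    apply sqrt_le_1_alt.
  - assert (Hlx : ln (ln x) <= 2 * ln (ln y)).
    { pose proof (exp_1_le_ln x Hxe); pose proof (exp_1_le_ln y Hy); pose proof exp_1_gt_2.
      pose proof (exp_pos (exp 1)).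
      eapply Rle_trans; [| exact (ln_ln_sqr_le y Hy)].
      apply ln_le_ln; [lra |]; apply ln_le_ln; [lra | nra]. }
    pose proof (ln_ln_ge_1 x Hxe).
    apply Rle_trans with (alpha * y * ln (ln x)); [apply Rmult_le_compat_r; lra |].
    replace (2 * alpha * (y * ln (ln y))) with (alpha * y * (2 * ln (ln y))) by ring.
    apply Rmult_le_compat_l; nra.
  - assert (1 <= y * ln (ln y)) by nra.
    nra.
Qed.

Lemma le_of_le_add_phi kappa C s a :
  kappa ^ 2 <= C -> 2 <= C -> exp (exp 1) <= s -> 1 + 3 * C <= s ->
  (exp (exp 1) <= a -> a <= s + kappa * phi a) -> a <= (1 + 3 * C) * s.
Proof.
  intros HC HC2 Hs1 Hs2 Ha.
  destruct (Rle_dec (exp (exp 1)) a) as [Hae | Hae]; [| nra].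
  specialize (Ha Hae); unfold phi in Ha; destruct Rle_dec as [_ | ]; [| lra].
  pose proof (ln_ln_ge_1 a Hae) as HL; pose proof (ln_ln_lt_2_sqrt a Hae) as HLq.
  pose proof (exp_pos (exp 1)).
  set (L := ln (ln a)) in *; set (q := sqrt a) in *.
  assert (Hq : q * q = a) by (apply sqrt_sqrt; lra).
  assert (Hr : sqrt L * sqrt L = L) by (apply sqrt_sqrt; lra).
  rewrite sqrt_mult_alt in Ha by lra; fold q in Ha.
  assert (Hamgm : kappa * (q * sqrt L) <= (a + kappa ^ 2 * L) / 2).
  { pose proof (pow2_ge_0 (q - kappa * sqrt L)); nra. }
  assert (Hq2 : q * q <= 2 * s + 2 * C * q) by nra.
  destruct (Rle_dec q (1 + 3 * C)) as [Hqs | Hqs].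
  - pose proof (sqrt_pos a); nra.
  - nra.
Qed.

Lemma arrival_count_le_add_phi lam Gam U t n :
  0 < lam -> is_arrival_count U t n ->
  Rabs (psum U n - / lam * INR n) <= Gam * phi (INR n) ->
  INR n <= lam * t + lam * Gam * phi (INR n).
Proof.
  intros Hlam [Hn _] HU.
  pose proof (Rle_abs (- (psum U n - / lam * INR n))); rewrite Rabs_Ropp in *.
  replace (lam * Gam * phi (INR n)) with (lam * (Gam * phi (INR n))) by ring.
  rewrite <- Rmult_plus_distr_l; apply le_mul_of_inv_mul_le; lra.
Qed.

Lemma arrival_count_le lam lmax Gam U t n :
  0 < lam -> lam <= lmax -> exp (2 * exp 1) <= lam * Gam ->
  (forall k, (1 <= k)%nat -> Rabs (psum U k - / lam * INR k) <= Gam * phi (INR k)) ->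
  is_arrival_count U t n ->
  / lam * exp (exp 1) <= t -> / lam + 3 * / lam * lmax ^ 2 * Gam ^ 2 <= t ->
  INR n <= (1 + 3 * (lmax ^ 2 * Gam ^ 2)) * (lam * t).
Proof.
  intros Hlam Hmax HlG HU Hn Ht1 Ht2.
  assert (HlG2 : 2 <= lam * Gam).
  { pose proof (exp_ineq1_le (2 * exp 1)); pose proof exp_1_gt_2; lra. }
  apply le_of_le_add_phi with (kappa := lam * Gam).
  - replace ((lam * Gam) ^ 2) with (lam ^ 2 * Gam ^ 2) by ring.
    apply Rmult_le_compat_r; [nra |]; apply pow_incr; lra.
  - assert (lam * Gam <= lmax * Gam) by (apply Rmult_le_compat_r; nra). nra.
  - exact (le_mul_of_inv_mul_le _ _ _ Hlam Ht1).
  - apply le_mul_of_inv_mul_le; [exact Hlam |]; apply Rle_trans with (2 := Ht2); right; ring.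
  - intros Hne; apply (arrival_count_le_add_phi lam Gam U t n Hlam Hn), HU.
    destruct n; [simpl in Hne; pose proof (exp_pos (exp 1)); lra | lia].
Qed.

Lemma sum_to_ext n f g :
  (forall i, (i < n)%nat -> f i = g i) -> sum_to n f = sum_to n g.
Proof.
  induction n as [| n IH]; intros Hfg; simpl; [reflexivity |].
  rewrite IH, Hfg; [reflexivity | lia |].
  intros i Hi; apply Hfg; lia.
Qed.

Lemma sum_to_le n f g :
  (forall i, (i < n)%nat -> f i <= g i) -> sum_to n f <= sum_to n g.
Proof.
  induction n as [| n IH]; intros Hfg; simpl; [lra |].
  pose proof (IH (fun i Hi => Hfg i ltac:(lia))); pose proof (Hfg n ltac:(lia)); lra.
Qed.

Lemma sum_to_0 n : sum_to n (fun _ => 0) = 0.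
Proof. induction n as [| n IH]; simpl; [| rewrite IH]; ring. Qed.

Lemma sum_to_add n f g : sum_to n (fun i => f i + g i) = sum_to n f + sum_to n g.
Proof. induction n as [| n IH]; simpl; [| rewrite IH]; ring. Qed.

Lemma sum_to_sub n f g : sum_to n (fun i => f i - g i) = sum_to n f - sum_to n g.
Proof. induction n as [| n IH]; simpl; [| rewrite IH]; ring. Qed.

Lemma sum_to_scal n c f : sum_to n (fun i => c * f i) = c * sum_to n f.
Proof. induction n as [| n IH]; simpl; [| rewrite IH]; ring. Qed.

Lemma sum_to_swap n m f :
  sum_to n (fun i => sum_to m (fun k => f i k)) = sum_to m (fun k => sum_to n (fun i => f i k)).
Proof.
  induction n as [| n IH]; simpl; [symmetry; apply sum_to_0 |].
  rewrite IH, <- sum_to_add; reflexivity.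
Qed.

Lemma sum_to_ident n x j : (j < n)%nat -> sum_to n (fun k => ident k j * x k) = x j.
Proof.
  induction n as [| n IH]; intros Hj; [lia |]; simpl; unfold ident at 2.
  destruct (Nat.eqb_spec n j) as [-> | Hne].
  - rewrite (sum_to_ext _ _ (fun _ => 0)), sum_to_0; [ring |].
    intros i Hi; unfold ident; destruct (Nat.eqb_spec i j); [lia | ring].
  - rewrite IH by lia; ring.
Qed.

Lemma I_minus_PT_sub J P x y j :
  I_minus_PT J P (fun i => x i - y i) j = I_minus_PT J P x j - I_minus_PT J P y j.
Proof.
  unfold I_minus_PT.
  rewrite (sum_to_ext _ _ (fun k => P k j * x k - P k j * y k)), sum_to_sub by (intros; ring).
  ring.
Qed.

Lemma I_minus_PT_scal J P c x j :
  I_minus_PT J P (fun i => c * x i) j = c * I_minus_PT J P x j.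
Proof.
  unfold I_minus_PT.
  rewrite (sum_to_ext _ _ (fun k => c * (P k j * x k))), sum_to_scal by (intros; ring).
  ring.
Qed.

Lemma sum_matmul_r J M P x j :
  sum_to J (fun k => matmul J M P k j * x k) =
  sum_to J (fun l => P l j * sum_to J (fun k => M k l * x k)).
Proof.
  unfold matmul.
  rewrite (sum_to_ext _ _ (fun k => sum_to J (fun l => P l j * M k l * x k))).
  - rewrite sum_to_swap; apply sum_to_ext; intros l _.
    rewrite <- sum_to_scal; apply sum_to_ext; intros; ring.
  - intros k _; rewrite Rmult_comm, <- sum_to_scal; apply sum_to_ext; intros; ring.
Qed.

Section NilpotentNonnegative.

Variables (J : nat) (P : nat -> nat -> R).
Hypothesis P_ge0 : forall i k, (i < J)%nat -> (k < J)%nat -> 0 <= P i k.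

Lemma le_sum_matpow_of_I_minus_PT_nonpos x :
  (forall j, (j < J)%nat -> I_minus_PT J P x j <= 0) ->
  forall n j, (j < J)%nat -> x j <= sum_to J (fun k => matpow J P n k j * x k).
Proof.
  intros Hx n; induction n as [| n IH]; intros j Hj; simpl.
  - rewrite sum_to_ident by exact Hj; lra.
  - rewrite sum_matmul_r.
    apply Rle_trans with (sum_to J (fun k => P k j * x k)).
    + pose proof (Hx j Hj); unfold I_minus_PT in *; lra.
    + apply sum_to_le; intros l Hl; apply Rmult_le_compat_l; auto.
Qed.

Hypothesis P_nilpotent :
  exists N, forall i k, (i < J)%nat -> (k < J)%nat -> matpow J P N i k = 0.

Lemma I_minus_PT_nonpos x :
  (forall j, (j < J)%nat -> I_minus_PT J P x j <= 0) ->
  forall j, (j < J)%nat -> x j <= 0.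
Proof.
  intros Hx j Hj; destruct P_nilpotent as [N HN].
  apply Rle_trans with (1 := le_sum_matpow_of_I_minus_PT_nonpos x Hx N j Hj).
  rewrite <- (sum_to_0 J); apply Req_le, sum_to_ext; intros k Hk; rewrite HN by assumption; ring.
Qed.

Lemma I_minus_PT_le_inv x y :
  (forall j, (j < J)%nat -> I_minus_PT J P x j <= I_minus_PT J P y j) ->
  forall j, (j < J)%nat -> x j <= y j.
Proof.
  intros Hxy j Hj.
  enough (x j - y j <= 0) by lra.
  apply (I_minus_PT_nonpos (fun i => x i - y i)); [| exact Hj].
  intros i Hi; rewrite I_minus_PT_sub; specialize (Hxy i Hi); lra.
Qed.

Lemma le_I_minus_PT_inv lam x :
  (forall j, (j < J)%nat -> 0 <= lam j) ->
  (forall j, (j < J)%nat -> I_minus_PT J P x j = lam j) ->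
  forall j, (j < J)%nat -> lam j <= x j.
Proof.
  intros Hlam Hx j Hj.
  assert (Hx0 : forall k, (k < J)%nat -> 0 <= x k).
  { intros k Hk; replace 0 with (0 * x k) by ring.
    apply (I_minus_PT_le_inv (fun i => 0 * x i)); [| exact Hk].
    intros i Hi; rewrite I_minus_PT_scal, Hx by exact Hi; specialize (Hlam i Hi); lra. }
  assert (Hsum : 0 <= sum_to J (fun k => P k j * x k)).
  { rewrite <- (sum_to_0 J); apply sum_to_le; intros k Hk.
    apply Rmult_le_pos; auto. }
  specialize (Hx j Hj); unfold I_minus_PT in Hx; lra.
Qed.

End NilpotentNonnegative.

Lemma max_to_ge n l k : (k < n)%nat -> l k <= max_to n l.
Proof.
  induction n as [| n IH]; intros Hk; [lia |]; simpl.
  destruct (Nat.eq_dec k n) as [-> | Hne]; [apply Rmax_r |].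
  apply Rle_trans with (max_to n l); [apply IH; lia | apply Rmax_l].
Qed.

Theorem mainTheorem8
  (J : nat) (lambda : nat -> R) (Gamma : R) (U : nat -> nat -> R)
  (P : nat -> nat -> R) (lbar : nat -> R) (A : nat -> R -> nat)
  (Abar : nat -> R) (t : R)
  (hlam : forall j, (j < J)%nat -> 0 < lambda j)
  (hGam : forall j, (j < J)%nat -> exp (2 * exp 1) <= lambda j * Gamma)
  (hU : forall j k, (j < J)%nat -> (1 <= k)%nat ->
          Rabs (psum (U j) k - / lambda j * INR k) <= Gamma * phi (INR k))
  (hP01 : forall i k, (i < J)%nat -> (k < J)%nat -> P i k = 0 \/ P i k = 1)
  (hProw : forall i, (i < J)%nat ->
          sum_to J (fun k => P i k) = 0 \/ sum_to J (fun k => P i k) = 1)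
  (hPnil : exists N : nat, forall i k, (i < J)%nat -> (k < J)%nat ->
          matpow J P N i k = 0)
  (hlbar : forall j, (j < J)%nat -> I_minus_PT J P lbar j = lambda j)
  (hA : forall j, (j < J)%nat -> is_arrival_count (U j) t (A j t))
  (hAbar : forall j, (j < J)%nat -> I_minus_PT J P Abar j = INR (A j t))
  (ht : forall j, (j < J)%nat ->
          / lambda j * exp (exp 1) <= t /\
          / lambda j + 3 * / lambda j * (max_to J lambda) ^ 2 * Gamma ^ 2 <= t) :
  forall j, (j < J)%nat ->
    phi (Abar j) <=
      sqrt (2 + 6 * (max_to J lambda) ^ 2 * Gamma ^ 2) * phi (lbar j * t).
Proof.
  intros j Hj.
  set (c := max_to J lambda) in *; set (alpha := 1 + 3 * (c ^ 2 * Gamma ^ 2)).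
  assert (P_ge0 : forall i k, (i < J)%nat -> (k < J)%nat -> 0 <= P i k).
  { intros i k Hi Hk; destruct (hP01 i k Hi Hk) as [-> | ->]; lra. }
  assert (hA_le : forall k, (k < J)%nat -> INR (A k t) <= alpha * (lambda k * t)).
  { intros k Hk; destruct (ht k Hk).
    apply (arrival_count_le _ _ Gamma (U k)); auto; apply max_to_ge, Hk. }
  assert (hAbar_le : Abar j <= alpha * t * lbar j).
  { apply (I_minus_PT_le_inv J P P_ge0 hPnil Abar (fun i => alpha * t * lbar i)); auto.
    intros i Hi; rewrite I_minus_PT_scal, hAbar, hlbar by exact Hi.
    specialize (hA_le i Hi); lra. }
  assert (lam_le_lbar : lambda j <= lbar j).
  { apply (le_I_minus_PT_inv J P P_ge0 hPnil lambda lbar); auto.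
    intros i Hi; specialize (hlam i Hi); lra. }
  pose proof (hlam j Hj); destruct (ht j Hj) as [ht1 ht2].
  apply le_mul_of_inv_mul_le in ht1; [| assumption].
  assert (alpha <= lambda j * t).
  { apply le_mul_of_inv_mul_le; [assumption |].
    apply Rle_trans with (2 := ht2); right; unfold alpha; ring. }
  assert (lam_t_le : lambda j * t <= lbar j * t).
  { apply Rmult_le_compat_r; [pose proof (exp_pos (exp 1)); nra | exact lam_le_lbar]. }
  assert (0 <= c ^ 2 * Gamma ^ 2) by nra.
  replace (2 + 6 * c ^ 2 * Gamma ^ 2) with (2 * alpha) by (unfold alpha; ring).
  apply phi_le_sqrt_scale; unfold alpha in *; lra.
Qed.
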